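(* Let $G=(V,E)$ be a digraph of directed tree-width at most $k$, and let $V_1,V_2$ satisfy $V_1\cup V_2=V$, $V_1\cap V_2=\emptyset$ and $\{(u,v),(v,u):u\in V_1,v\in V_2\}\subseteq E$. Then there is a directed tree-decomposition $(T,\mathcal{X},\mathcal{W})$, $T=(V_T,E_T)$, of $G$ of width at most $k$ such that $V_1\subseteq X_e$ for every $e\in E_T$, or $V_2\subseteq X_e$ for every $e\in E_T$.
   Context: Digraphs are finite, without loops or multiple arcs. An out-tree is a digraph whose underlying graph is a tree, with a root such that all arcs are directed away from it; $u\le v$ means there is a directed path with $\ge0$ arcs from $u$ to $v$. For $Z\subseteq V$, a set $S\subseteq V$ is $Z$-normal if there is no directed walk in $G-Z$ with first and last vertices in $S$ that uses a vertex of $G-(Z\cup S)$. A directed tree-decomposition of $G=(V,E)$ is a triple $(T,\mathcal{X},\mathcal{W})$ with $T=(V_T,E_T)$ an out-tree, $\mathcal{X}=\{X_e:e\in E_T\}$ and $\mathcal{W}=\{W_r:r\in V_T\}$ subsets of $V$, such that $\mathcal{W}$ is a partition of $V$ into nonempty sets and for every $(u,v)\in E_T$ the set $\bigcup\{W_r: r\in V_T, v\le r\}$ is $X_{(u,v)}$-normal. Its width is $\max_{r\in V_T}|W_r\cup\bigcup_{e\sim r}X_e|-1$ ($e\sim r$: $r$ is an end vertex of $e$); the directed tree-width is the minimum width. *)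

From mathcomp Require Import all_boot.
Set Implicit Arguments. Unset Strict Implicit. Unset Printing Implicit Defensive.

(* A digraph is a finite type V with an arc relation E : rel V
   (a relation excludes multiple arcs; loops are excluded by irreflexive E). *)

Section DTW.

Variable VT : finType.
Variable ET : rel VT.

Definition und_adj : rel VT := fun x y => ET x y || ET y x.

(* a cycle in the underlying (simple) graph: >= 3 distinct vertices *)
Definition und_has_cycle : Prop :=
  exists (x : VT) (p : seq VT),
    [/\ uniq (x :: p), 2 <= size p, path und_adj x p & und_adj (last x p) x].

(* underlying graph is a tree: a simple graph (no antiparallel arcs, no
   loops, so no multiple edges), nonempty, connected and acyclic *)
Definition underlying_tree : Prop :=
  [/\ irreflexive ET,
      (forall x y, ~~ (ET x y && ET y x)),
      #|VT| > 0,
      (forall x y, connect und_adj x y) &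
      ~ und_has_cycle].

(* out-tree: underlying graph a tree, and some root r from which all arcs
   are directed away, i.e. every vertex is reachable from r along arcs *)
Definition out_tree : Prop :=
  underlying_tree /\ exists r : VT, forall v, connect ET r v.

End DTW.

Section Decomp.
Variable V : finType.
Variable E : rel V.

Definition normal (Z S : {set V}) : Prop :=
  ~ exists (x : V) (p : seq V),
      [/\ x \in S, last x p \in S, path E x p,
          all (fun y => y \notin Z) (x :: p) &
          has (fun y => y \notin S) (x :: p)].

Variable VT : finType.
Variable ET : rel VT.
(* X u v is X_(u,v), meaningful for arcs (u,v) of T *)
Variable X : VT -> VT -> {set V}.
Variable W : VT -> {set V}.

Definition is_dir_tree_decomp : Prop :=
  [/\ out_tree ET,
      (forall r, W r != set0),
      (forall r s, r != s -> [disjoint W r & W s]),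
      (forall v : V, exists r, v \in W r) &
      (forall u v, ET u v ->
         normal (X u v) (\bigcup_(r | connect ET v r) W r))].

Definition bag (r : VT) : {set V} :=
  W r :|: (\bigcup_(u | ET u r) X u r) :|: (\bigcup_(w | ET r w) X r w).

Definition dtd_width : nat := (\max_(r : VT) #|bag r|) - 1.

End Decomp.

Definition dtw_at_most (V : finType) (E : rel V) (k : nat) : Prop :=
  exists (VT : finType) (ET : rel VT) (X : VT -> VT -> {set V})
         (W : VT -> {set V}),
    is_dir_tree_decomp E ET X W /\ dtd_width ET X W <= k.

From mathcomp Require Import all_boot.
Set Implicit Arguments. Unset Strict Implicit. Unset Printing Implicit Defensive.

(* Take a decomposition of width at most k whose tree has as few nodes as
   possible. If for an arc (u,v) the set S of vertices in parts at or below v,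
   or its complement, lies inside X_(u,v), then the subtree below v, or
   everything outside it, can be merged into the bag of u, resp. v, without
   increasing the width; by minimality this never happens. So S and its
   complement both meet G - X_(u,v); that graph is strongly connected as soon
   as it meets both V1 and V2, hence normality forces V1 or V2 into X_(u,v).
   Two arcs at a common node cannot pick different sides, since the bag of
   that node would then contain V1 :|: V2 = V, which is impossible once
   |V| > k + 1 (for |V| <= k + 1 a single bag will do). As the tree is
   connected, all arcs pick the same side. *)

Lemma connect_to_last (T : finType) (e : rel T) x s y :
  path e x s -> y \in x :: s -> connect e y (last x s).
Proof.
move=> exs; rewrite inE => /predU1P[->|ys]; first by apply/connectP; exists s.
move: exs; case/splitPr: ys => s1 s2.
rewrite cat_path last_cat /= => /and3P[_ _ eys2]; by apply/connectP; exists s2.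
Qed.

Section OutTree.
Variables (VT : finType) (ET : rel VT).
Hypothesis tree : out_tree ET.

Lemma und_adj_sym : symmetric (und_adj ET).
Proof. by move=> x y; rewrite /und_adj orbC. Qed.

Lemma und_path x s : path ET x s -> path (und_adj ET) x s.
Proof. by apply: sub_path => a b eab; rewrite /und_adj eab. Qed.

Lemma und_path_rev x s :
  path ET x s -> path (und_adj ET) (last x s) (rev (belast x s)).
Proof. by rewrite rev_path; apply: sub_path => a b eab; rewrite /und_adj eab orbT. Qed.

Lemma no_und_cycle_through z x w :
  z \notin x :: w -> path (und_adj ET) x w -> last x w != x ->
  und_adj ET z x -> und_adj ET (last x w) z -> False.
Proof.
case: tree => [[_ _ _ _ acyclic] _] zw /shortenP[w' xw' uw' sub_w] xw zx wz.
apply: acyclic; exists z, (x :: w'); split => //; last by rewrite /= zx.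
- rewrite cons_uniq uw' andbT; apply: contra zw.
  by rewrite !inE => /predU1P[->|/sub_w ->]; rewrite ?eqxx ?orbT.
- by case: w' {xw' uw' sub_w wz} xw => [|? ?] //=; rewrite eqxx.
Qed.

Lemma no_back_arc a b : ET a b -> ~~ connect ET b a.
Proof.
case: (tree) => [[irr anti _ _ _] _] eab.
apply/negP => /connectP[s /shortenP[s' bs' ubs' _]].
case/lastP: s' bs' ubs' => [/= _ _ ba|q c]; first by move: eab; rewrite -ba irr.
rewrite last_rcons rcons_path -rcons_cons rcons_uniq => /andP[bq qa] /andP[aq uq] ca.
subst c; case: q bq qa aq uq => [|c q] bq qa aq uq.
  by move: (anti a b); rewrite eab qa.
apply: (no_und_cycle_through aq (und_path bq)); rewrite /und_adj ?eab ?qa ?orbT //.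
move: uq; rewrite cons_uniq => /andP[bq' _]; apply: contraNneq bq' => <-.
exact: mem_last c q.
Qed.

Lemma parent_uniq p q z : ET p z -> ET q z -> p = q.
Proof.
case: (tree) => [_ [r root]] epz eqz; have [//|npq] := eqVneq p q; exfalso.
case/connectP: (root p) => sp rsp lp; case/connectP: (root q) => sq rsq lq.
have sp_z y : y \in r :: sp -> y != z.
  move=> ysp; apply: contraNneq (no_back_arc epz) => <-; rewrite lp; exact: connect_to_last ysp.
have sq_z y : y \in r :: sq -> y != z.
  move=> ysq; apply: contraNneq (no_back_arc eqz) => <-; rewrite lq; exact: connect_to_last ysq.
have rev_last : last p (rev (belast r sp)) = r.
  by rewrite lp; case: (sp) => //= c s; rewrite rev_cons last_rcons.
apply: (@no_und_cycle_through z p (rev (belast r sp) ++ sq)).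
- rewrite inE mem_cat mem_rev !negb_or; apply/and3P; split.
  + by rewrite eq_sym sp_z // lp mem_last.
  + by apply/negP => /mem_belast /sp_z; rewrite eqxx.
  + by apply/negP => /(@mem_behead _ (r :: sq)) /sq_z; rewrite eqxx.
- by rewrite cat_path {1}lp und_path_rev // rev_last und_path.
- by rewrite last_cat rev_last -lq eq_sym.
- by rewrite /und_adj epz orbT.
- by rewrite last_cat rev_last -lq /und_adj eqz.
Qed.

Lemma connect_parent v c b : connect ET v c -> c != v -> ET b c -> connect ET v b.
Proof.
case/connectP => s vs ->; case/lastP: s vs => [|s c'] /=; first by rewrite eqxx.
rewrite last_rcons rcons_path => /andP[vs sc'] _ bc'.
by rewrite -(parent_uniq sc' bc'); apply/connectP; exists s.
Qed.

Lemma connect_into_subtree u v b w : ET u v -> ~~ connect ET v b ->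
  connect ET b w -> connect ET v w -> connect ET b u.
Proof.
move=> uv vb /connectP[s bs ->] {w}.
elim: s b vb bs => [|c s IHs] b vb /=; first by move=> _ vb'; rewrite vb' in vb.
case/andP=> bc cs vs; have [vc|vc] := boolP (connect ET v c).
  have [cv|cv] := eqVneq c v; first by rewrite -(parent_uniq uv (_ : ET b v)) // -cv.
  by rewrite (connect_parent vc cv bc) in vb.
exact: connect_trans (connect1 bc) (IHs c vc cs vs).
Qed.

End OutTree.

Definition subtree_part (V VT : finType) (ET : rel VT) (W : VT -> {set V}) v :=
  \bigcup_(r | connect ET v r) W r.

Lemma sep_sub_bag (V VT : finType) (ET : rel VT) (X : VT -> VT -> {set V}) W r c d :
  ET c d -> (c == r) || (d == r) -> X c d \subset bag ET X W r.
Proof.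
move=> cd /orP[/eqP <-|/eqP <-]; apply/subsetP => v vX; rewrite /bag !inE.
  by apply/orP; right; apply/bigcupP; exists d.
by apply/orP; left; apply/orP; right; apply/bigcupP; exists c.
Qed.

Lemma card_bag_le_width (V VT : finType) (ET : rel VT) (X : VT -> VT -> {set V}) W r :
  #|bag ET X W r| <= (dtd_width ET X W).+1.
Proof.
by apply: leq_trans (@leq_bigmax _ (fun r => #|bag ET X W r|) r) _; rewrite -add1n -leq_subLR.
Qed.

Lemma dtd_width_le_bag_sub (V VT VT' : finType) (ET : rel VT) (ET' : rel VT')
    (X : VT -> VT -> {set V}) (X' : VT' -> VT' -> {set V}) W W' (g : VT' -> VT) :
  (forall x, bag ET' X' W' x \subset bag ET X W (g x)) ->
  dtd_width ET' X' W' <= dtd_width ET X W.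
Proof.
move=> bag_sub; rewrite /dtd_width leq_sub2r //; apply/bigmax_leqP => x _.
exact: leq_trans (subset_leq_card (bag_sub x)) (leq_bigmax _).
Qed.

Definition has_smaller_decomp (V : finType) (E : rel V) (VT : finType) (ET : rel VT)
    (X : VT -> VT -> {set V}) (W : VT -> {set V}) : Prop :=
  exists (VT' : finType) (ET' : rel VT') (X' : VT' -> VT' -> {set V})
         (W' : VT' -> {set V}),
    [/\ #|VT'| < #|VT|, is_dir_tree_decomp E ET' X' W' &
        dtd_width ET' X' W' <= dtd_width ET X W].

Section Restrict.
Variables (V : finType) (E : rel V) (VT : finType) (ET : rel VT).
Variables (X : VT -> VT -> {set V}) (W : VT -> {set V}).
Hypothesis decomp : is_dir_tree_decomp E ET X W.
Variables (K : pred VT) (m rt : VT).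
Hypotheses (Km : K m) (Krt : K rt).
Hypothesis rt_root : forall y, K y -> connect ET rt y.
Hypothesis K_convex : forall x s, K x -> path ET x s -> K (last x s) -> all K s.
Hypothesis W_outside : forall w, ~~ K w -> W w \subset bag ET X W m.
(* Merging a node w outside K into m must not change the subtree below an arc of K. *)
Hypothesis outside_below :
  forall a b w, ET a b -> K a -> K b -> ~~ K w -> connect ET b m = connect ET b w.

Definition restrict_node : finType := {x : VT | K x}.
Definition restrict_arc : rel restrict_node := fun x y => ET (val x) (val y).
Definition restrict_sep (x y : restrict_node) := X (val x) (val y).
Definition contract_to w := if K w then w else m.
Definition contract_part (x : restrict_node) :=
  \bigcup_(w | contract_to w == val x) W w.

Lemma contract_toK w : K (contract_to w).
Proof. by rewrite /contract_to; case: ifP. Qed.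

Lemma connect_restrict x y : connect restrict_arc x y = connect ET (val x) (val y).
Proof.
apply/idP/idP.
  case/connectP => s xs ->; apply/connectP; exists (map val s).
    by rewrite path_map.
  by rewrite last_map.
case/connectP => s xs ly; have := K_convex (valP x) xs; rewrite -ly => /(_ (valP y)).
elim: s x xs ly => [|c s IHs] x /=; first by move=> _ /val_inj ->.
case/andP=> xc cs ly /andP[Kc Ks].
exact: connect_trans (connect1 (xc : restrict_arc x (Sub c Kc))) (IHs (Sub c Kc) cs ly Ks).
Qed.

Lemma restrict_out_tree : out_tree restrict_arc.
Proof.
case: decomp => [[[irr anti _ _ acyclic] _] _ _ _ _].
have rt_root' y : connect restrict_arc (Sub rt Krt) y.
  by rewrite connect_restrict SubK rt_root ?(valP y).
split; last by exists (Sub rt Krt).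
split.
- by move=> x; apply: irr.
- by move=> x y; apply: anti.
- by apply/card_gt0P; exists (Sub rt Krt).
- have und_root y : connect (und_adj restrict_arc) (Sub rt Krt) y.
    by apply: connect_sub (rt_root' y) => a b ab; rewrite connect1 // /und_adj ab.
  move=> x y; apply: connect_trans (und_root y).
  by rewrite (sym_connect_sym (@und_adj_sym _ _)).
- case=> x [p [up sp xp px]]; apply: acyclic; exists (val x), (map val p).
  by rewrite -map_cons (map_inj_uniq val_inj) size_map path_map last_map.
Qed.

Lemma restrict_bag_sub x :
  bag restrict_arc restrict_sep contract_part x \subset bag ET X W (val x).
Proof.
apply/subsetP => v /setUP[/setUP[|]|].
- case/bigcupP=> w /eqP <- vw; rewrite /contract_to; case: ifP => Kw.
    by rewrite /bag !inE vw.
  exact: (subsetP (W_outside (negbT Kw))).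
- case/bigcupP=> y yx vy; apply: (subsetP (sep_sub_bag X W yx _)) vy.
  by rewrite eqxx orbT.
- case/bigcupP=> y xy vy; apply: (subsetP (sep_sub_bag X W xy _)) vy.
  by rewrite eqxx.
Qed.

Lemma restrict_subtree_part x y : restrict_arc x y ->
  subtree_part restrict_arc contract_part y = subtree_part ET W (val y).
Proof.
move=> xy; have below_contract w : connect ET (val y) (contract_to w) = connect ET (val y) w.
  rewrite /contract_to; case: ifPn => // Kw.
  exact: outside_below xy (valP x) (valP y) Kw.
apply/setP => v; apply/bigcupP/bigcupP.
- case=> z yz /bigcupP[w /eqP wz vw]; exists w => //.
  by rewrite -below_contract wz -connect_restrict.
- case=> w yw vw; exists (Sub (contract_to w) (contract_toK w)).
    by rewrite connect_restrict SubK below_contract.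
  by apply/bigcupP; exists w; rewrite ?SubK.
Qed.

Lemma restrict_decomp : is_dir_tree_decomp E restrict_arc restrict_sep contract_part.
Proof.
case: decomp => [_ W_nonempty W_disj W_cover normal_X].
split.
- exact: restrict_out_tree.
- move=> x; case/set0Pn: (W_nonempty (val x)) => v vx; apply/set0Pn; exists v.
  by apply/bigcupP; exists (val x); rewrite // /contract_to (valP x).
- move=> x y; apply: contraNT.
  case/pred0Pn=> v /andP[/bigcupP[w /eqP wx vw] /bigcupP[w' /eqP w'y vw']].
  have [ww'|ww'] := eqVneq w w'; first by apply/eqP/val_inj; rewrite -wx -w'y ww'.
  by move: (W_disj _ _ ww') => /pred0P/(_ v); rewrite /= vw vw'.
- move=> v; case: (W_cover v) => w vw; exists (Sub (contract_to w) (contract_toK w)).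
  by apply/bigcupP; exists w; rewrite ?SubK.
- by move=> x y xy; rewrite -/(subtree_part _ _ _) (restrict_subtree_part xy); apply: normal_X.
Qed.

Lemma restrict_smaller : (exists w, ~~ K w) -> has_smaller_decomp E ET X W.
Proof.
case=> w Kw; exists restrict_node, restrict_arc, restrict_sep, contract_part; split.
- rewrite card_sig -[X in _ < X](cardC K) -{1}(addn0 #|[pred x | K x]|) ltn_add2l.
  exact/card_gt0P/(ex_intro _ w Kw).
- exact: restrict_decomp.
- exact: dtd_width_le_bag_sub restrict_bag_sub.
Qed.

End Restrict.

Section Shrink.
Variables (V : finType) (E : rel V) (VT : finType) (ET : rel VT).
Variables (X : VT -> VT -> {set V}) (W : VT -> {set V}).
Hypothesis decomp : is_dir_tree_decomp E ET X W.
Variables u v : VT.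
Hypothesis uv : ET u v.

Lemma prune_subtree : subtree_part ET W v \subset X u v -> has_smaller_decomp E ET X W.
Proof.
have tree : out_tree ET by case: decomp.
move=> S_sub; have [_ [r root]] := tree.
apply: (restrict_smaller decomp (K := fun w => ~~ connect ET v w) (m := u) (rt := r)).
- exact: (no_back_arc tree uv).
- by apply: contra (no_back_arc tree uv) => vr; apply: connect_trans vr (root u).
- by move=> y _; apply: root.
- move=> x s _ xs; apply: contraLR => /allPn[c cs /negPn vc]; apply/negPn.
  by apply: connect_trans vc (connect_to_last xs _); rewrite inE cs orbT.
- move=> w /negPn vw; apply: subset_trans (sep_sub_bag X W uv _); last by rewrite eqxx.
  by apply: subset_trans S_sub; apply: bigcup_sup.
- move=> a b w _ _ vb /negPn vw; apply/idP/idP => [bu|bw].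
    exact: connect_trans bu (connect_trans (connect1 uv) vw).
  exact: (connect_into_subtree tree uv vb bw vw).
- by exists v; rewrite negbK.
Qed.

Lemma keep_subtree : ~: subtree_part ET W v \subset X u v -> has_smaller_decomp E ET X W.
Proof.
case: (decomp) => [tree _ W_disj _ _] S_sub.
apply: (restrict_smaller decomp (K := connect ET v) (m := v) (rt := v)) => //.
- move=> x s vx xs _; apply/allP => c cs.
  by apply: connect_trans vx (path_connect xs _); rewrite inE cs orbT.
- move=> w vw; apply: subset_trans (sep_sub_bag X W uv _); last by rewrite eqxx orbT.
  apply: subset_trans S_sub; apply/subsetP => x xw; rewrite inE.
  apply/bigcupP => -[r vr xr]; have wr : w != r by apply: contraNneq vw => ->.
  by move: (W_disj _ _ wr) => /pred0P/(_ x); rewrite /= xw xr.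
- move=> a b w ab va vb vw; rewrite (negbTE (contra (connect_trans vb) vw)).
  by apply/negbTE/(contra _ (no_back_arc tree ab)) => bv; apply: connect_trans bv va.
- by exists u; apply: (no_back_arc tree uv).
Qed.

End Shrink.

Definition degenerate_arc (V VT : finType) (ET : rel VT) (X : VT -> VT -> {set V})
    (W : VT -> {set V}) u v :=
  (subtree_part ET W v \subset X u v) || (~: subtree_part ET W v \subset X u v).

Lemma exists_nondegenerate_decomp (V : finType) (E : rel V) (VT : finType) (ET : rel VT)
    (X : VT -> VT -> {set V}) (W : VT -> {set V}) :
  is_dir_tree_decomp E ET X W ->
  exists (VT' : finType) (ET' : rel VT') (X' : VT' -> VT' -> {set V})
         (W' : VT' -> {set V}),
    [/\ is_dir_tree_decomp E ET' X' W', dtd_width ET' X' W' <= dtd_width ET X W &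
        forall u v, ET' u v -> ~~ degenerate_arc ET' X' W' u v].
Proof.
move: {2}#|VT| (leqnn #|VT|) => n; elim: n VT ET X W => [|n IHn] VT ET X W size_VT decomp.
  by case: decomp => [[[_ _ VT_gt0 _ _] _] _ _ _ _]; move: size_VT; rewrite leqNgt VT_gt0.
have [/existsP[u /existsP[v /andP[uv degen]]]|] :=
  boolP [exists u, exists v, ET u v && degenerate_arc ET X W u v]; last first.
  move=> /existsPn nondegen; exists VT, ET, X, W; split => // u v uv.
  by move: (existsPn (nondegen u) v); rewrite uv.
have [VT' [ET' [X' [W' [smaller decomp' width']]]]] : has_smaller_decomp E ET X W.
  by case/orP: degen; [apply: prune_subtree | apply: keep_subtree].
have size_VT' : #|VT'| <= n by rewrite -ltnS (leq_trans smaller).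
have [VT'' [ET'' [X'' [W'' [decomp'' width'' nondegen]]]]] := IHn _ _ _ _ size_VT' decomp'.
by exists VT'', ET'', X'', W''; split => //; apply: leq_trans width'' width'.
Qed.

Section Normal.
Variables (V : finType) (E : rel V) (Z : {set V}).

(* From a start outside Z, walks along these arcs are exactly the walks of G - Z. *)
Definition arc_avoiding : rel V := fun a b => E a b && (b \notin Z).

Lemma path_avoiding x p : x \notin Z -> path arc_avoiding x p ->
  path E x p && all (fun y => y \notin Z) (x :: p).
Proof.
elim: p x => [|y p IHp] x /= xZ; first by rewrite xZ.
by case/andP=> /andP[xy yZ] /(IHp _ yZ) /andP[-> /= ->]; rewrite xy xZ.
Qed.

Lemma normal_sub_or_compl_sub S :
  (forall x y, x \notin Z -> y \notin Z -> connect arc_avoiding x y) ->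
  normal E Z S -> (S \subset Z) || (~: S \subset Z).
Proof.
move=> strong nS; apply/negPn/negP; rewrite negb_or.
case/andP=> /subsetPn[x xS xZ] /subsetPn[y]; rewrite inE => yS yZ; apply: nS.
case/connectP: (strong x y xZ yZ) => p xp yp; case/connectP: (strong y x yZ xZ) => q yq xq.
have /andP[Exq Zxq] : path E x (p ++ q) && all (fun y => y \notin Z) (x :: p ++ q).
  by apply: path_avoiding; rewrite // cat_path xp -yp.
exists x, (p ++ q); split => //; first by rewrite last_cat -yp -xq.
by apply/hasP; exists y; rewrite // -cat_cons mem_cat yp mem_last.
Qed.

End Normal.

Section CompleteBipartite.
Variables (V : finType) (E : rel V) (V1 V2 : {set V}).
Hypothesis V12_cover : V1 :|: V2 = [set: V].
Hypothesis V12_complete : forall u v, u \in V1 -> v \in V2 -> E u v /\ E v u.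

Lemma complete_bipartite_connect_avoiding (Z : {set V}) :
  ~~ (V1 \subset Z) -> ~~ (V2 \subset Z) ->
  forall x y, y \notin Z -> connect (arc_avoiding E Z) x y.
Proof.
case/subsetPn=> b1 b1V1 b1Z /subsetPn[b2 b2V2 b2Z].
have side x : (x \in V1) || (x \in V2) by rewrite -in_setU V12_cover inE.
have arc12 u w : u \in V1 -> w \in V2 -> w \notin Z -> connect (arc_avoiding E Z) u w.
  move=> uV wV wZ; apply: connect1; rewrite /arc_avoiding wZ andbT.
  by case: (V12_complete uV wV).
have arc21 u w : u \in V1 -> w \in V2 -> u \notin Z -> connect (arc_avoiding E Z) w u.
  move=> uV wV uZ; apply: connect1; rewrite /arc_avoiding uZ andbT.
  by case: (V12_complete uV wV).
have to_b2 x : connect (arc_avoiding E Z) x b2.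
  case/orP: (side x) => xV; first exact: arc12.
  exact: connect_trans (arc21 _ _ b1V1 xV b1Z) (arc12 _ _ b1V1 b2V2 b2Z).
have from_b2 y : y \notin Z -> connect (arc_avoiding E Z) b2 y.
  move=> yZ; case/orP: (side y) => yV; first exact: arc21.
  exact: connect_trans (arc21 _ _ b1V1 b2V2 b1Z) (arc12 _ _ b1V1 yV yZ).
by move=> x y yZ; apply: connect_trans (to_b2 x) (from_b2 y yZ).
Qed.

Lemma normal_sep_contains_side Z S : normal E Z S ->
  ~~ (S \subset Z) -> ~~ (~: S \subset Z) -> (V1 \subset Z) || (V2 \subset Z).
Proof.
move=> nS SZ SZ'; apply/negPn/negP; rewrite negb_or => /andP[V1Z V2Z].
have strong x y (_ : x \notin Z) : y \notin Z -> connect (arc_avoiding E Z) x y.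
  exact: complete_bipartite_connect_avoiding.
by move: (normal_sub_or_compl_sub strong nS); rewrite (negbTE SZ) (negbTE SZ').
Qed.

End CompleteBipartite.

Section OneSided.
Variables (V VT : finType) (ET : rel VT) (X : VT -> VT -> {set V}) (W : VT -> {set V}).
Variables A B : {set V}.
Hypothesis und_connected : forall x y, connect (und_adj ET) x y.
Hypothesis no_bag_covers : forall r, ~~ (A :|: B \subset bag ET X W r).
Hypothesis arc_side : forall c d, ET c d -> (A \subset X c d) || (B \subset X c d).

Lemma arcs_one_sided :
  (forall c d, ET c d -> A \subset X c d) \/ (forall c d, ET c d -> B \subset X c d).
Proof.
pose incident_B :=
  [pred n | [forall c, forall d, ET c d && ((c == n) || (d == n)) ==> (B \subset X c d)]].
have incident_B_of n c0 d0 : ET c0 d0 -> (c0 == n) || (d0 == n) -> B \subset X c0 d0 ->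
    incident_B n.
  move=> c0d0 at0 B0; apply/forallP => c; apply/forallP => d.
  apply/implyP => /andP[cd at_n]; case/orP: (arc_side cd) => // Acd.
  case/negP: (no_bag_covers n); rewrite subUset.
  rewrite (subset_trans Acd (sep_sub_bag X W cd at_n)).
  exact: subset_trans B0 (sep_sub_bag X W c0d0 at0).
have [/forallP allA|] := boolP [forall c, forall d, ET c d ==> (A \subset X c d)].
  by left => c d; move/forallP: (allA c) => /(_ d) /implyP.
rewrite negb_forall => /existsP[a]; rewrite negb_forall => /existsP[b].
rewrite negb_imply => /andP[ab Aab].
have B_a : a \in incident_B.
  by apply: (incident_B_of a a b); rewrite ?eqxx //; move: (arc_side ab); rewrite (negbTE Aab).
have closed_B : closed (und_adj ET) incident_B.
  apply: intro_closed; first exact: sym_connect_sym (@und_adj_sym _ _).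
  move=> n n' nn' /forallP B_n.
  have [c0 [d0 [c0d0 at_n at_n']]] : exists c0 d0,
      [/\ ET c0 d0, (c0 == n) || (d0 == n) & (c0 == n') || (d0 == n')].
    by case/orP: nn' => ?; [exists n, n' | exists n', n]; rewrite !eqxx ?orbT.
  by apply: (incident_B_of n' c0 d0) => //; move/forallP/(_ d0): (B_n c0); rewrite c0d0 at_n.
right => c d cd; have := closed_connect closed_B (und_connected a c).
rewrite B_a inE => /esym/forallP/(_ c)/forallP/(_ d).
by rewrite cd eqxx.
Qed.

End OneSided.

Lemma dir_tree_decomp_card_gt0 (V : finType) (E : rel V) (VT : finType) (ET : rel VT)
    (X : VT -> VT -> {set V}) (W : VT -> {set V}) :
  is_dir_tree_decomp E ET X W -> 0 < #|V|.
Proof.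
case=> [[[_ _ /card_gt0P[r _] _ _] _] W_nonempty _ _ _].
by case/set0Pn: (W_nonempty r) => v _; apply/card_gt0P; exists v.
Qed.

Section SingleBag.
Variables (V : finType) (E : rel V).

Definition single_arc : rel unit := fun _ _ => false.
Definition single_sep : unit -> unit -> {set V} := fun _ _ => set0.
Definition single_part : unit -> {set V} := fun _ => setT.

Lemma single_bag_decomp : 0 < #|V| -> is_dir_tree_decomp E single_arc single_sep single_part.
Proof.
case/card_gt0P => v0 _; split => //.
- split; last by exists tt => -[].
  split => //; [by rewrite card_unit | by move=> [] [] |].
  by move=> [[] [[|[] p] []]].
- by move=> r; apply/set0Pn; exists v0; rewrite inE.
- by move=> v; exists tt; rewrite inE.
Qed.

Lemma single_bag_width : dtd_width single_arc single_sep single_part <= #|V| - 1.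
Proof.
by rewrite leq_sub2r //; apply/bigmax_leqP => r _; apply: max_card.
Qed.

End SingleBag.

Theorem lemma4p9 (V : finType) (E : rel V) (k : nat)
  (V1 V2 : {set V}) :
  irreflexive E ->
  dtw_at_most E k ->
  V1 :|: V2 = [set: V] ->
  V1 :&: V2 = set0 ->
  (forall u v, u \in V1 -> v \in V2 -> E u v /\ E v u) ->
  exists (VT : finType) (ET : rel VT) (X : VT -> VT -> {set V})
         (W : VT -> {set V}),
    [/\ is_dir_tree_decomp E ET X W,
        dtd_width ET X W <= k &
        (forall e1 e2, ET e1 e2 -> V1 \subset X e1 e2) \/
        (forall e1 e2, ET e1 e2 -> V2 \subset X e1 e2)].
Proof.
move=> _ [VT [ET [X [W [decomp width]]]]] cover _ complete.
have [small|large] := leqP #|V| k.+1.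
  exists unit, single_arc, (single_sep V), (single_part V); split; last by left.
  - exact/single_bag_decomp/(dir_tree_decomp_card_gt0 decomp).
  - by apply: leq_trans (single_bag_width V) _; rewrite leq_subLR add1n.
have [VT' [ET' [X' [W' [decomp' width' nondegen]]]]] := exists_nondegenerate_decomp decomp.
have width_k : dtd_width ET' X' W' <= k := leq_trans width' width.
exists VT', ET', X', W'; split => //.
case: (decomp') => [[[_ _ _ und_connected _] _] _ _ _ normal_X].
apply: (arcs_one_sided (W := W')) => // [r|c d cd].
  rewrite cover; apply: contraL large => /subset_leq_card; rewrite cardsT -leqNgt => V_le.
  by apply: leq_trans V_le (leq_trans (card_bag_le_width ET' X' W' r) _); rewrite ltnS.
move: (nondegen c d cd); rewrite negb_or => /andP[].
by apply: (normal_sep_contains_side cover complete (normal_X c d cd)).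
Qed.
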